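(* Let $N\ge2$ and consider $\mathbb{C}^{d_1}\otimes\cdots\otimes\mathbb{C}^{d_N}$ with bases $\{\mathbf{G}^{(l)}_i\}$ and constants $\kappa_l\ge1$ as in the context. If an $N$-partite state $\rho$ is fully separable, then its correlation tensor $\mathcal{T}^{(1\cdots N)}$ satisfies $$\big\|\mathcal{T}^{(1\cdots N)}\big\|_{\rm tr}\le\prod_{l=1}^N\sqrt{\frac{d_l^2-d_l}{\kappa_l}}.$$
   Context: For each $l$, $\{\mathbf{G}^{(l)}_i\}_{i=0}^{d_l^2-1}$ is a basis of complex $d_l\times d_l$ matrices with $\mathbf{G}^{(l)}_0=\mathbf{I}_{d_l}$, $\mathrm{Tr}(\mathbf{G}^{(l)}_i)=0$, $\mathrm{Tr}((\mathbf{G}^{(l)}_i)^\dagger\mathbf{G}^{(l)}_{i'})=\kappa_l\delta_{ii'}$ for $i,i'\ge1$, $\kappa_l\ge1$. $\mathcal{T}^{(1\cdots N)}\in\mathbb{C}^{(d_1^2-1)\times\cdots\times(d_N^2-1)}$ has entries $\frac{d_1\cdots d_N}{\kappa_1\cdots\kappa_N}\mathrm{Tr}\big(\rho(\mathbf{G}^{(1)}_{i_1}\otimes\cdots\otimes\mathbf{G}^{(N)}_{i_N})\big)$, $i_l\in\{1,\dots,d_l^2-1\}$. $\rho$ is fully separable if $\rho=\sum_ip_i\rho^{(1)}_i\otimes\cdots\otimes\rho^{(N)}_i$ with $p_i\ge0$, $\sum p_i=1$, $\rho^{(l)}_i$ pure states on $\mathbb{C}^{d_l}$. Index map: $\iota_n^{(D_1,\dots,D_k)}(j_1,\dots,j_k)=(\prod_{s=1}^nD_s)\sum_{s'=n+1}^k((j_{s'}-1)\prod_{s''=s'+1}^kD_{s''})+\sum_{s'=1}^n((j_{s'}-1)\prod_{s''=s'+1}^nD_{s''})+1$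 (empty products $1$, empty sums $0$). For a tensor $\mathcal{A}=(a_{i_1\cdots i_N})\in\mathbb{C}^{D_1\times\cdots\times D_N}$, disjoint nonempty $R=\{r_1<\cdots<r_k\}$, $C=\{c_1<\cdots<c_{N-k}\}$ with $R\cup C=\{1,\dots,N\}$, $n\in\{1,\dots,k\}$, $m\in\{1,\dots,N-k\}$, the mixed unfolding $\mathbf{A}_{(R,n;C,m)}$ is the $(D_{r_1}\cdots D_{r_k})\times(D_{c_1}\cdots D_{c_{N-k}})$ matrix with $a_{i_1\cdots i_N}$ in row $\iota_n^{(D_{r_1},\dots,D_{r_k})}(i_{r_1},\dots,i_{r_k})$ and column $\iota_m^{(D_{c_1},\dots,D_{c_{N-k}})}(i_{c_1},\dots,i_{c_{N-k}})$. The trace norm of the tensor is $\|\mathcal{A}\|_{\rm tr}=\max\|\mathbf{A}_{(R,n;C,m)}\|_{\rm tr}$, the maximum over all such $R,C,n,m$, where for a matrix $\|\mathbf{X}\|_{\rm tr}=\mathrm{Tr}((\mathbf{X}^\dagger\mathbf{X})^{1/2})$. *)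

(* Complex numbers: an arbitrary numClosedFieldType C
   (the complex numbers are an instance; the statement is algebraic). *)
From HB Require Import structures.
From mathcomp Require Import all_boot all_order all_algebra.
Set Implicit Arguments. Unset Strict Implicit. Unset Printing Implicit Defensive.
Import Order.TTheory GRing.Theory Num.Theory.
Local Open Scope ring_scope.

Section Defs.
Variable C : numClosedFieldType.

Definition adjmx m n (A : 'M[C]_(m, n)) : 'M[C]_(n, m) := (map_mx Num.conj A)^T.

(* trace norm  Tr((X^dagger X)^{1/2}) = sum of the square roots of the
   eigenvalues (with multiplicity) of the PSD matrix X^dagger X *)
Definition eigs n (A : 'M[C]_n) : seq C :=
  sval (closed_field_poly_normal (char_poly A)).
Definition trnorm m n (X : 'M[C]_(m, n)) : C :=
  \sum_(z <- eigs (adjmx X *m X)) sqrtC z.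

Definition pure_state n (A : 'M[C]_n) : Prop :=
  exists v : 'cV[C]_n, adjmx v *m v = 1 /\ A = v *m adjmx v.

Definition midx N (D : 'I_N -> nat) := {dffun forall l : 'I_N, 'I_(D l)}.

(* Operators on C^{d_1} (x) ... (x) C^{d_N}, written in the product basis:
   rho J K is the matrix entry <J| rho |K>. *)
Definition fully_separable N (d : 'I_N -> nat) (rho : midx d -> midx d -> C) : Prop :=
  exists (M : nat) (p : 'I_M -> C) (psi : 'I_M -> forall l : 'I_N, 'M[C]_(d l)),
    [/\ forall i, 0 <= p i,
        \sum_(i < M) p i = 1,
        forall i l, pure_state (psi i l)
      & forall J K, rho J K = \sum_(i < M) p i * \prod_(l < N) psi i l (J l) (K l)].

(* Hypotheses on the basis {G^{(l)}_i}_{i=0}^{d^2-1} of d x d complex matrices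
   (indexed by nat; only i < d^2 matters). *)
Definition GM_basis n (G : nat -> 'M[C]_n) (kappa : C) : Prop :=
  [/\ G 0%N = 1%:M,
      (forall c : nat -> C, \sum_(i < n ^ 2) c i *: G i = 0 ->
          forall i, (i < n ^ 2)%N -> c i = 0),
      (forall i, (1 <= i < n ^ 2)%N -> \tr (G i) = 0),
      (forall i i', (1 <= i < n ^ 2)%N -> (1 <= i' < n ^ 2)%N ->
          \tr (adjmx (G i) *m G i') = if i == i' then kappa else 0)
    & 1 <= kappa].

(* correlation tensor; the 0-based tensor index j_l : 'I_(d_l^2-1) stands for
   the paper's index i_l = j_l + 1 in {1,...,d_l^2-1} *)
Definition corr_tensor N (d : 'I_N -> nat) (G : forall l : 'I_N, nat -> 'M[C]_(d l))
  (kappa : 'I_N -> C) (rho : midx d -> midx d -> C)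
  (j : midx (fun l => (d l ^ 2 - 1)%N)) : C :=
  ((\prod_(l < N) (d l)%:R) / \prod_(l < N) kappa l) *
  \sum_(J : midx d) \sum_(K : midx d)
     rho J K * \prod_(l < N) G l (j l).+1 (K l) (J l).

(* The index map iota_n^{(D_1..D_k)}(j_1..j_k) minus 1, with 0-based
   positions s and 0-based digits e_s = j_s - 1. *)
Definition iota_map (n : nat) (Ds es : seq nat) : nat :=
  let k := size Ds in
  ((\prod_(0 <= s < n) nth 0 Ds s) *
     \sum_(n <= s' < k) (nth 0 es s' * \prod_(s'.+1 <= s'' < k) nth 0 Ds s'') +
   \sum_(0 <= s' < n) (nth 0 es s' * \prod_(s'.+1 <= s'' < n) nth 0 Ds s''))%N.

(* mixed unfolding A_(R,n;C,m), C = complement of R; rows/columns 0-based.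
   enum R lists r_1 < ... < r_k in increasing order. *)
Definition mixed_unfolding N (D : 'I_N -> nat) (A : midx D -> C)
  (R : {set 'I_N}) (n m : nat) :
  'M[C]_(\prod_(r in R) D r, \prod_(c in ~: R) D c) :=
  \matrix_(p, q) \sum_(i : midx D |
      (iota_map n [seq D r | r <- enum R] [seq nat_of_ord (i r) | r <- enum R] == p)
   && (iota_map m [seq D c | c <- enum (~: R)] [seq nat_of_ord (i c) | c <- enum (~: R)] == q))
      A i.

(* tensor trace norm: maximum over all R, C nonempty, n in 1..|R|, m in 1..|C|
   (all candidates are nonnegative reals) *)
Definition tensor_trnorm N (D : 'I_N -> nat) (A : midx D -> C) : C :=
  \big[Num.max/0]_(R : {set 'I_N} | (R != set0) && (R != setT))
    \big[Num.max/0]_(n < #|R|) \big[Num.max/0]_(m < #|~: R|)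
       trnorm (mixed_unfolding A R n.+1 m.+1).

End Defs.

(* A fully separable state is a convex combination of product pure states, so
   its correlation tensor is a convex combination of outer products of the local
   Bloch vectors x_l = (d_l / kappa_l) tr (psi_l G_k).  Every mixed unfolding of an
   outer product is a rank-one matrix, whose trace norm is its Frobenius norm
   prod_l |x_l|, and the trace norm is subadditive.  Finally 1/sqrt d together with
   the G_k / sqrt kappa is an orthonormal family, so Bessel's inequality for a pure
   state (tr psi = tr psi^2 = 1) gives |x_l|^2 <= (d_l^2 / kappa_l) (1 - 1/d_l). *)

From HB Require Import structures.
From mathcomp Require Import all_boot all_order all_algebra.
From mathcomp Require Import ring zify spectral.
Set Implicit Arguments. Unset Strict Implicit. Unset Printing Implicit Defensive.
Import Order.TTheory GRing.Theory Num.Theory.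
Local Open Scope ring_scope.

Section Bessel.
Variable C : numClosedFieldType.
Implicit Types I J : finType.

Definition orthonormal_or_zero I J (s : J -> I -> C) :=
  (forall j j', j != j' -> \sum_i (s j i)^* * s j' i = 0) /\
  (forall j, \sum_i (s j i)^* * s j i = 1 \/ forall i, s j i = 0).

Lemma sumr_norm2_ge0 I (a : I -> C) : 0 <= \sum_i `|a i| ^+ 2.
Proof. by apply: sumr_ge0 => i _; rewrite exprn_ge0. Qed.

(* With [b] the projection of [a] on the span of [s], [0 <= |a - b|^2 = |a|^2 - T]. *)
Lemma bessel I J (s : J -> I -> C) (a : I -> C) : orthonormal_or_zero s ->
  \sum_j `|\sum_i (s j i)^* * a i| ^+ 2 <= \sum_i `|a i| ^+ 2.
Proof.
move=> [orth nrm].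
pose c j := \sum_i (s j i)^* * a i.
pose b i := \sum_j c j * s j i.
pose T := \sum_j `|c j| ^+ 2.
have T_ge0 : 0 <= T by apply: sumr_norm2_ge0.
have ba : \sum_i (b i)^* * a i = T.
  under eq_bigr do rewrite rmorph_sum /= mulr_suml.
  rewrite exchange_big /=; apply: eq_bigr => j _.
  rewrite normCK mulrC /c mulr_sumr; apply: eq_bigr => i _.
  by rewrite rmorphM /=; ring.
have bb : \sum_i (b i)^* * b i = T.
  transitivity (\sum_j \sum_j' (c j)^* * c j' * \sum_i (s j i)^* * s j' i).
    under eq_bigr do rewrite rmorph_sum /= mulr_suml.
    rewrite exchange_big /=; apply: eq_bigr => j _.
    under eq_bigr do rewrite mulr_sumr.
    rewrite exchange_big /=; apply: eq_bigr => j' _.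
    rewrite mulr_sumr; apply: eq_bigr => i _.
    by rewrite rmorphM /=; ring.
  apply: eq_bigr => j _; rewrite (bigD1 j) //= [X in _ + X]big1 ?addr0; last first.
    by move=> j' ne; rewrite orth 1?eq_sym // mulr0.
  case: (nrm j) => [->|s0]; first by rewrite mulr1 normCK mulrC.
  have -> : c j = 0 by rewrite /c big1 // => i _; rewrite s0 rmorph0 mul0r.
  by rewrite rmorph0 !mul0r normr0 expr2 mul0r.
have ab : \sum_i (a i)^* * b i = T.
  rewrite -(conj_Creal (ger0_real T_ge0)) -ba rmorph_sum; apply: eq_bigr => i _.
  by rewrite rmorphM /= conjCK mulrC.
have : 0 <= \sum_i `|a i - b i| ^+ 2 by apply: sumr_norm2_ge0.
have -> : \sum_i `|a i - b i| ^+ 2 = \sum_i `|a i| ^+ 2 - T.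
  transitivity (\sum_i `|a i| ^+ 2 - \sum_i (b i)^* * a i - \sum_i (a i)^* * b i
                 + \sum_i (b i)^* * b i).
    rewrite -!sumrB -big_split /=; apply: eq_bigr => i _.
    by rewrite !normCK rmorphB /=; ring.
  by rewrite ba bb ab; ring.
by rewrite subr_ge0.
Qed.

Lemma cauchy_schwarz_sq I (x y : I -> C) :
  `|\sum_i x i * y i| ^+ 2 <= (\sum_i `|x i| ^+ 2) * (\sum_i `|y i| ^+ 2).
Proof.
set ny := \sum_i `|y i| ^+ 2.
have [ny0|ny_neq0] := eqVneq ny 0.
  have y0 i : y i = 0.
    move/psumr_eq0P: ny0 => /(_ (fun i _ => exprn_ge0 2 (normr_ge0 (y i)))).
    by move=> /(_ i isT) /eqP; rewrite expf_eq0 /= normr_eq0 => /eqP.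
  rewrite big1 ?normr0 ?expr2 ?mul0r ?ny0 ?mulr0 // => i _.
  by rewrite y0 mulr0.
have ny_gt0 : 0 < ny by rewrite lt_def ny_neq0 sumr_norm2_ge0.
set r := sqrtC ny.
have r_gt0 : 0 < r by rewrite sqrtC_gt0.
have r_conj : r^* = r by rewrite conj_Creal // ger0_real // ltW.
have := @bessel I 'I_1 (fun _ i => (y i)^* / r) x.
rewrite big_ord1.
have -> : \sum_i ((y i)^* / r)^* * x i = (\sum_i x i * y i) / r.
  rewrite mulr_suml; apply: eq_bigr => i _.
  by rewrite rmorphM /= conjCK fmorphV /= r_conj; ring.
rewrite normrM normfV (gtr0_norm r_gt0) expr_div_n sqrtCK ler_pdivrMr //.
apply; split=> [j j'|_]; first by rewrite !ord1 eqxx.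
left; under eq_bigr do rewrite rmorphM /= conjCK fmorphV /= r_conj.
transitivity (ny / (r * r)).
  rewrite /ny mulr_suml; apply: eq_bigr => i _; rewrite normCK invfM; ring.
by rewrite -expr2 sqrtCK divff.
Qed.

Lemma cauchy_schwarz I (x y : I -> C) :
  `|\sum_i x i * y i| <= sqrtC (\sum_i `|x i| ^+ 2) * sqrtC (\sum_i `|y i| ^+ 2).
Proof.
rewrite -sqrtCM ?nnegrE ?sumr_norm2_ge0 // -[leLHS]sqrCK //.
by rewrite ler_sqrtC ?nnegrE ?exprn_ge0 ?mulr_ge0 ?sumr_norm2_ge0 ?cauchy_schwarz_sq.
Qed.

End Bessel.

Section TraceNorm.
Variable C : numClosedFieldType.

Lemma char_poly_conjmx n (P A : 'M[C]_n) : P \in unitmx ->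
  char_poly (invmx P *m A *m P) = char_poly A.
Proof.
move=> P_unit; rewrite /char_poly /char_poly_mx.
set Q := map_mx polyC P; set Qi := map_mx polyC (invmx P).
have QiQ : Qi *m Q = 1%:M by rewrite /Qi /Q -map_mxM mulVmx // map_mx1.
have -> : 'X%:M - map_mx polyC (invmx P *m A *m P) =
          Qi *m ('X%:M - map_mx polyC A) *m Q.
  rewrite mulmxBr mulmxBl !map_mxM -/Q -/Qi; congr (_ - _).
  by rewrite -mulmxA -scalar_mxC mulmxA QiQ mul1mx.
rewrite !det_mulmx mulrC mulrA -det_mulmx.
by rewrite -map_mxM mulmxV // map_mx1 det1 mul1r.
Qed.

Lemma adjmxE m n (A : 'M[C]_(m, n)) : adjmx A = map_mx Num.conj A^T.
Proof. by rewrite /adjmx map_trmx. Qed.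

Lemma adjmx_mul m n p (A : 'M[C]_(m, n)) (B : 'M[C]_(n, p)) :
  adjmx (A *m B) = adjmx B *m adjmx A.
Proof. by rewrite /adjmx map_mxM trmx_mul. Qed.

Lemma adjmxK m n (A : 'M[C]_(m, n)) : adjmx (adjmx A) = A.
Proof. by apply/matrixP => i j; rewrite !mxE conjCK. Qed.

Lemma mxtrace_adjmx n (A : 'M[C]_n) : \tr (adjmx A) = (\tr A)^*.
Proof. by rewrite /adjmx mxtrace_tr trace_map_mx. Qed.

Lemma mxtrace_adjmx_mul m n (A B : 'M[C]_(m, n)) :
  \tr (adjmx A *m B) = \sum_a \sum_b (A a b)^* * B a b.
Proof.
rewrite exchange_big; apply: eq_bigr => b _; rewrite mxE.
by apply: eq_bigr => a _; rewrite !mxE.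
Qed.

Lemma adjmxZ m n (c : C) (A : 'M[C]_(m, n)) : adjmx (c *: A) = c^* *: adjmx A.
Proof. by apply/matrixP => a b; rewrite !mxE rmorphM. Qed.

Lemma adjmx_mul_normal m n (X : 'M[C]_(m, n)) : adjmx X *m X \is normalmx.
Proof.
suff herm : map_mx Num.conj (adjmx X *m X)^T = adjmx X *m X by apply/normalmxP; rewrite herm.
apply/matrixP => i j; rewrite !mxE rmorph_sum; apply: eq_bigr => p _.
by rewrite /adjmx !mxE rmorphM /= conjCK mulrC.
Qed.

Section Spectral.
Variables (m n : nat) (X : 'M[C]_(m, n)).
Let H := adjmx X *m X.
Let P := spectralmx H.
Let lambda i := spectral_diag H 0 i.
Let W := X *m adjmx P.

Let H_diag : H = invmx P *m diag_mx (spectral_diag H) *m P.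
Proof. exact/orthomx_spectralP/adjmx_mul_normal. Qed.

Lemma trnorm_spectral : trnorm X = \sum_i sqrtC (lambda i).
Proof.
rewrite /trnorm /eigs -/H; case: closed_field_poly_normal => r /= r_roots.
have : perm_eq r [seq lambda i | i <- index_enum 'I_n].
  apply: prod_XsubC_eq; rewrite big_map.
  move: r_roots; rewrite (monicP (char_poly_monic _)) scale1r => <-.
  rewrite H_diag char_poly_conjmx ?spectral_unit // char_poly_trig ?diag_mx_is_trig //.
  by apply: eq_bigr => i _; rewrite mxE eqxx mulr1n.
by move=> r_perm; rewrite (perm_big _ r_perm) big_map.
Qed.

Lemma spectral_gram i j :
  \sum_p (W p i)^* * W p j = if i == j then lambda i else 0.
Proof.
have P_unitary : P \is unitarymx := spectral_unitarymx H.
have WW : adjmx W *m W = diag_mx (spectral_diag H).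
  have PP : P *m adjmx P = 1%:M by rewrite [adjmx P]adjmxE; apply/unitarymxP.
  rewrite adjmx_mul adjmxK mulmxA -[P *m _ *m X]mulmxA -/H [in LHS]H_diag !mulmxA.
  by rewrite mulmxV ?unitarymx_unit // mul1mx -mulmxA PP mulmx1.
transitivity ((adjmx W *m W) i j).
  by rewrite [RHS]mxE; apply: eq_bigr => p _; rewrite !mxE.
by rewrite WW mxE; case: eqP => [->|]; rewrite ?mulr1n ?mulr0n.
Qed.

Lemma spectral_diag_ge0 i : 0 <= lambda i.
Proof.
have := spectral_gram i i; rewrite eqxx => <-.
by rewrite sumr_ge0 // => p _; rewrite -normCKC exprn_ge0.
Qed.

Lemma trnorm_ge0 : 0 <= trnorm X.
Proof. by rewrite trnorm_spectral sumr_ge0 // => i _; rewrite sqrtC_ge0 spectral_diag_ge0. Qed.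

(* A singular value decomposition: [v] are the eigenvectors of [X^dagger X] and
   [u i] is [X v_i / sqrt lambda_i], or [0] when [lambda_i = 0]. *)
Lemma trnorm_dual : exists (u : 'I_n -> 'I_m -> C) (v : 'I_n -> 'I_n -> C),
  [/\ orthonormal_or_zero u, orthonormal_or_zero v &
      trnorm X = \sum_i \sum_p \sum_q (u i p)^* * X p q * (v i q)^*].
Proof.
pose mu i := if lambda i == 0 then 0 else (sqrtC (lambda i))^-1.
have mu_conj i : (mu i)^* = mu i.
  rewrite /mu; case: eqP => _; first by rewrite rmorph0.
  by rewrite fmorphV /= conj_Creal // sqrtC_real ?spectral_diag_ge0.
exists (fun i p => mu i * W p i), (fun i q => P i q); split.
- split=> [i j ij|i].
    under eq_bigr do rewrite rmorphM /= mu_conj mulrACA.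
    by rewrite -mulr_sumr spectral_gram (negPf ij) mulr0.
  rewrite /mu; case: eqP => [_|/eqP lambda_neq0]; first by right => p; rewrite mul0r.
  left; under eq_bigr do rewrite rmorphM /= mulrACA.
  rewrite -mulr_sumr spectral_gram eqxx fmorphV /= conj_Creal ?sqrtC_real ?spectral_diag_ge0 //.
  by rewrite -invfM -expr2 sqrtCK mulVf.
- have PP := unitarymxP (spectral_unitarymx H).
  split=> [i j ij|i]; last left.
    have := congr1 (fun M : 'M[C]_n => M j i) PP.
    rewrite !mxE [j == i]eq_sym (negPf ij) mulr0n => PPji; rewrite -[RHS]PPji.
    by apply: eq_bigr => q _; rewrite !mxE mulrC.
  have := congr1 (fun M : 'M[C]_n => M i i) PP; rewrite !mxE eqxx mulr1n => <-.
  by apply: eq_bigr => q _; rewrite !mxE mulrC.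
- rewrite trnorm_spectral; apply: eq_bigr => i _.
  transitivity (mu i * lambda i).
    rewrite /mu; case: eqP => [->|/eqP lambda_neq0]; first by rewrite sqrtC0 mul0r.
    by rewrite -{3}[lambda i]sqrtCK expr2 mulKf // sqrtC_eq0.
  have := spectral_gram i i; rewrite eqxx => <-; rewrite mulr_sumr; apply: eq_bigr => p _.
  rewrite rmorphM /= mu_conj mulrA [X in _ * X]mxE mulr_sumr; apply: eq_bigr => q _.
  by rewrite mulrA /adjmx !mxE.
Qed.

End Spectral.

Lemma trnorm_sum_outer_le m n (K : finType) (a : K -> 'I_m -> C) (b : K -> 'I_n -> C) :
  trnorm (\matrix_(p, q) \sum_k a k p * b k q) <=
  \sum_k sqrtC (\sum_p `|a k p| ^+ 2) * sqrtC (\sum_q `|b k q| ^+ 2).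
Proof.
set X := \matrix_(p, q) _.
apply: le_trans (real_ler_norm (ger0_real (trnorm_ge0 X))) _.
have [u [v [u_on v_on ->]]] := trnorm_dual X.
have -> : \sum_i \sum_p \sum_q (u i p)^* * X p q * (v i q)^* =
    \sum_k \sum_i (\sum_p (u i p)^* * a k p) * (\sum_q (v i q)^* * b k q).
  symmetry; rewrite exchange_big; apply: eq_bigr => i _ /=.
  under eq_bigr do rewrite big_distrl /=.
  under eq_bigr do under eq_bigr do rewrite big_distrr /=.
  rewrite exchange_big; apply: eq_bigr => p _; rewrite exchange_big; apply: eq_bigr => q _.
  by rewrite mxE mulr_sumr mulr_suml; apply: eq_bigr => k _; ring.
apply: le_trans (ler_norm_sum _ _ _) _; apply: ler_sum => k _.
apply: le_trans (cauchy_schwarz _ _) _.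
by apply: ler_pM; rewrite ?sqrtC_ge0 ?ler_sqrtC ?nnegrE ?sumr_norm2_ge0 ?bessel.
Qed.

Lemma rank1_factor m n (Y : 'I_m -> 'I_n -> C) :
  (forall p q p' q', Y p q * Y p' q' = Y p q' * Y p' q) ->
  {ab : ('I_m -> C) * ('I_n -> C) | forall p q, Y p q = ab.1 p * ab.2 q}.
Proof.
move=> minors0; case: (pickP (fun pq : 'I_m * 'I_n => Y pq.1 pq.2 != 0)).
  move=> [p0 q0] /= Y0; exists ((fun p => Y p q0), (fun q => Y p0 q / Y p0 q0)).
  by move=> p q; rewrite /= mulrA -minors0 -mulrA divff ?mulr1.
move=> Y0; exists ((fun _ => 0), (fun _ => 0)) => p q.
by move/negbFE/eqP: (Y0 (p, q)) => ->; rewrite mul0r.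
Qed.

Lemma trnorm_sum_rank1_le m n (K : finType) (Y : K -> 'I_m -> 'I_n -> C) :
  (forall k p q p' q', Y k p q * Y k p' q' = Y k p q' * Y k p' q) ->
  trnorm (\matrix_(p, q) \sum_k Y k p q) <=
  \sum_k sqrtC (\sum_p \sum_q `|Y k p q| ^+ 2).
Proof.
move=> minors0; pose ab k := sval (rank1_factor (minors0 k)).
have Yab k p q : Y k p q = (ab k).1 p * (ab k).2 q := svalP (rank1_factor (minors0 k)) p q.
have -> : \matrix_(p, q) \sum_k Y k p q = \matrix_(p, q) \sum_k (ab k).1 p * (ab k).2 q.
  by apply/matrixP => p q; rewrite !mxE; apply: eq_bigr => k _; rewrite Yab.
apply: le_trans (trnorm_sum_outer_le _ _) _; rewrite le_eqVlt; apply/orP; left.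
apply/eqP/eq_bigr => k _; rewrite -sqrtCM ?nnegrE ?sumr_norm2_ge0 // big_distrl /=.
congr sqrtC; apply: eq_bigr => p _; rewrite big_distrr /=.
by apply: eq_bigr => q _; rewrite Yab normrM exprMn.
Qed.

End TraceNorm.

Lemma sum_midx_prod (R : comNzRingType) N (D : 'I_N -> nat)
    (f : forall l : 'I_N, 'I_(D l) -> R) :
  (\sum_(J : midx D) \prod_l f l (J l) = \prod_l \sum_(a : 'I_(D l)) f l a)%R.
Proof.
pose T_ l := ('I_(D l) : finType).
pose F l := [ffun a : T_ l => f l a].
rewrite (reindex (@dffun_of_fprod _ T_)); last exact/onW_bij/dffun_of_fprod_bij.
transitivity (\sum_(t : fprod T_) \prod_(l in 'I_N) F l (t l))%R.
  by apply: eq_bigr => t _; apply: eq_bigr => l _; rewrite /F !ffunE.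
rewrite big_fprod.
transitivity (\prod_l \sum_(j in tagged_with T_ l) untag 0 (F l) j)%R.
  exact/esym/bigA_distr_big_dep.
apply: eq_bigr => l _; rewrite -(big_tag (fun l a => F l a)).
by apply: eq_bigr => a _; rewrite ffunE.
Qed.

Section MixedRadix.
Local Open Scope nat_scope.
Variable base : nat -> nat.

Definition mixed_radix a b (e : nat -> nat) :=
  \sum_(a <= s < b) e s * \prod_(s.+1 <= t < b) base t.

Lemma mixed_radixS a b e : a <= b ->
  mixed_radix a b.+1 e = mixed_radix a b e * base b + e b.
Proof.
move=> ab; rewrite /mixed_radix big_nat_recr //= [X in _ + e b * X]big_geq // muln1.
congr (_ + _); rewrite big_distrl /=; apply: eq_big_nat => s /andP[_ sb].
by rewrite big_nat_recr //= mulnA.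
Qed.

Lemma mixed_radix_lt a b e : (forall s, a <= s < b -> e s < base s) ->
  mixed_radix a b e < \prod_(a <= s < b) base s.
Proof.
elim: b => [|b IHb] e_lt; first by rewrite /mixed_radix !big_geq.
have [ab|ba] := leqP a b; last by rewrite /mixed_radix !big_geq.
have lo : mixed_radix a b e < \prod_(a <= s < b) base s.
  by apply: IHb => s /andP[a_s sb]; rewrite e_lt // a_s ltnW.
have hi : e b < base b by rewrite e_lt // ab leqnn.
rewrite mixed_radixS // big_nat_recr //=; nia.
Qed.

Lemma mixed_radix_inj a b e e' :
  (forall s, a <= s < b -> e s < base s) -> (forall s, a <= s < b -> e' s < base s) ->
  mixed_radix a b e = mixed_radix a b e' -> forall s, a <= s < b -> e s = e' s.
Proof.
elim: b => [|b IHb] e_lt e'_lt eq_e s; first by rewrite ltn0 andbF.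
have [ab|ba] := leqP a b; last by move=> /andP[a_s sb]; lia.
have [eq_init eq_last] : mixed_radix a b e = mixed_radix a b e' /\ e b = e' b.
  move: eq_e; rewrite !mixed_radixS // => /(congr1 (edivn^~ (base b))).
  by rewrite !edivn_eq ?e_lt ?e'_lt ?ab ?leqnn // => -[].
move=> /andP[a_s]; rewrite ltnS leq_eqVlt => /orP[/eqP -> //|sb].
apply: IHb => [t /andP[a_t tb]|t /andP[a_t tb]||]; rewrite ?a_s //.
- by rewrite e_lt // a_t ltnW.
- by rewrite e'_lt // a_t ltnW.
Qed.

End MixedRadix.

Section IotaMap.
Local Open Scope nat_scope.

Lemma iota_mapE n Ds es : iota_map n Ds es =
  mixed_radix (nth 0 Ds) n (size Ds) (nth 0 es) * \prod_(0 <= s < n) nth 0 Ds s +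
  mixed_radix (nth 0 Ds) 0 n (nth 0 es).
Proof. by rewrite /iota_map mulnC. Qed.

Lemma iota_map_inj n Ds es es' : n <= size Ds ->
  size es = size Ds -> size es' = size Ds ->
  (forall s, s < size Ds -> nth 0 es s < nth 0 Ds s) ->
  (forall s, s < size Ds -> nth 0 es' s < nth 0 Ds s) ->
  iota_map n Ds es = iota_map n Ds es' -> es = es'.
Proof.
move=> n_le es_size es'_size es_lt es'_lt.
have low_lt e : (forall s, s < size Ds -> nth 0 e s < nth 0 Ds s) ->
    forall s, 0 <= s < n -> nth 0 e s < nth 0 Ds s.
  by move=> e_lt s /andP[_ sn]; rewrite e_lt // (leq_trans sn).
have high_lt e : (forall s, s < size Ds -> nth 0 e s < nth 0 Ds s) ->
    forall s, n <= s < size Ds -> nth 0 e s < nth 0 Ds s.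
  by move=> e_lt s /andP[_ sk]; rewrite e_lt.
rewrite !iota_mapE => /(congr1 (edivn^~ (\prod_(0 <= s < n) nth 0 Ds s))).
rewrite !edivn_eq ?(mixed_radix_lt (low_lt _ es_lt)) ?(mixed_radix_lt (low_lt _ es'_lt)) //.
case=> eq_hi eq_lo.
apply: (@eq_from_nth _ 0) => [|s]; first by rewrite es_size es'_size.
rewrite es_size => s_lt; have [sn|ns] := ltnP s n.
  by apply: (mixed_radix_inj (low_lt _ es_lt) (low_lt _ es'_lt) eq_lo).
by apply: (mixed_radix_inj (high_lt _ es_lt) (high_lt _ es'_lt) eq_hi); rewrite ns.
Qed.

End IotaMap.

Lemma sqrtC_prod (C : numClosedFieldType) (I : finType) (f : I -> C) :
  (forall i, 0 <= f i) -> sqrtC (\prod_i f i) = \prod_i sqrtC (f i).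
Proof.
move=> f_ge0; suff [] : sqrtC (\prod_i f i) = \prod_i sqrtC (f i) /\ 0 <= \prod_i f i by [].
apply: (big_rec2 (fun y z => sqrtC y = z /\ 0 <= y)); first by rewrite sqrtC1 ler01.
by move=> i y z _ [<- y_ge0]; rewrite sqrtCM ?nnegrE ?mulr_ge0.
Qed.

Lemma sum_ord_indicator_le (C : numDomainType) M (k : nat) (c : C) : 0 <= c ->
  \sum_(i < M) (if k == i then c else 0) <= c.
Proof.
move=> c_ge0; have [kM|Mk] := ltnP k M.
  rewrite (bigD1 (Ordinal kM)) //= eqxx big1 ?addr0 // => i i_neq.
  by case: eqP => // k_i; move: i_neq; rewrite -(inj_eq val_inj) /= k_i eqxx.
by rewrite big1 // => i _; rewrite gtn_eqF // (leq_trans (ltn_ord i)).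
Qed.

Section MixedUnfolding.
Variables (C : numClosedFieldType) (N : nat) (D : 'I_N -> nat).
Variables (R : {set 'I_N}) (n m : nat).
Hypotheses (n_le : (n <= #|R|)%N) (m_le : (m <= #|~: R|)%N).

Definition row_index (j : midx D) :=
  iota_map n [seq D r | r <- enum R] [seq nat_of_ord (j r) | r <- enum R].
Definition col_index (j : midx D) :=
  iota_map m [seq D c | c <- enum (~: R)] [seq nat_of_ord (j c) | c <- enum (~: R)].

Lemma nth_digit_lt (j : midx D) (s : seq 'I_N) i : (i < size s)%N ->
  (nth 0 [seq nat_of_ord (j r) | r <- s] i < nth 0 [seq D r | r <- s] i)%N.
Proof.
case: s => // r0 s i_lt.
by rewrite (nth_map r0) ?(nth_map r0) ?ltn_ord.
Qed.

Lemma row_col_index_inj j j' : row_index j = row_index j' -> col_index j = col_index j' -> j = j'.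
Proof.
have digits_inj (s : seq 'I_N) k : (k <= size s)%N ->
    iota_map k [seq D r | r <- s] [seq nat_of_ord (j r) | r <- s] =
    iota_map k [seq D r | r <- s] [seq nat_of_ord (j' r) | r <- s] ->
    {in s, forall r, j r = j' r}.
  move=> k_le /iota_map_inj eq_digits r r_s; apply: val_inj.
  have /eq_in_map : [seq nat_of_ord (j r) | r <- s] = [seq nat_of_ord (j' r) | r <- s].
    by apply: eq_digits; rewrite ?size_map // => i; apply: nth_digit_lt.
  exact.
move=> /digits_inj eqR /digits_inj eqC; apply/ffunP => l.
have [l_R|l_nR] := boolP (l \in R).
  by apply: eqR; rewrite ?mem_enum // -cardE.
by apply: eqC; rewrite ?mem_enum ?inE // -cardE.
Qed.

Definition splice (j j' : midx D) : midx D := [ffun l => if l \in R then j l else j' l].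

Lemma row_index_splice j j' : row_index (splice j j') = row_index j.
Proof.
rewrite /row_index; congr iota_map; apply/eq_in_map => r; rewrite mem_enum => r_R.
by rewrite ffunE r_R.
Qed.

Lemma col_index_splice j j' : col_index (splice j j') = col_index j'.
Proof.
rewrite /col_index; congr iota_map; apply/eq_in_map => c; rewrite mem_enum inE => c_nR.
by rewrite ffunE (negPf c_nR).
Qed.

Definition index_preimage (p q : nat) := [pick j | (row_index j == p) && (col_index j == q)].

Lemma index_preimageP p q j : index_preimage p q = Some j <-> row_index j = p /\ col_index j = q.
Proof.
rewrite /index_preimage; case: pickP => [j' /andP[/eqP row_j' /eqP col_j']|none].
  split=> [[<-] //|[row_j col_j]]; congr Some.
  by apply: row_col_index_inj; rewrite ?row_j ?col_j.
by split=> // -[row_j col_j]; move: (none j); rewrite row_j col_j !eqxx.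
Qed.

Lemma index_preimage_splice p q p' q' j j' :
  index_preimage p q = Some j -> index_preimage p' q' = Some j' ->
  index_preimage p q' = Some (splice j j').
Proof.
move=> /index_preimageP[row_j _] /index_preimageP[_ col_j'].
by apply/index_preimageP; rewrite row_index_splice col_index_splice.
Qed.

Lemma mixed_unfoldingE (A : midx D -> C) p q :
  mixed_unfolding A R n m p q = if index_preimage p q is Some j then A j else 0.
Proof.
rewrite mxE /index_preimage; case: pickP => [j0 j0_pq|none]; last exact: big_pred0.
rewrite (big_pred1 j0) // => j; apply/idP/eqP => [j_pq|->//].
move: j_pq j0_pq => /andP[/eqP row_j /eqP col_j] /andP[/eqP row_j0 /eqP col_j0].
by apply: row_col_index_inj; rewrite ?row_j ?row_j0 ?col_j ?col_j0.
Qed.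

Lemma mixed_unfolding_outer_minors (x : forall l, 'I_(D l) -> C) p q p' q' :
  let U := mixed_unfolding (fun j => \prod_l x l (j l)) R n m in
  U p q * U p' q' = U p q' * U p' q.
Proof.
rewrite /= !mixed_unfoldingE.
case E1: (index_preimage p q) => [j1|]; case E2: (index_preimage p' q') => [j2|].
- rewrite (index_preimage_splice E1 E2) (index_preimage_splice E2 E1) -!big_split /=.
  by apply: eq_bigr => l _; rewrite !ffunE; case: (l \in R); rewrite // mulrC.
all: case E3: (index_preimage p q') => [k1|]; rewrite ?mul0r //.
all: case E4: (index_preimage p' q) => [k2|]; rewrite ?mulr0 //.
- by have := index_preimage_splice E4 E3; rewrite E2.
- by have := index_preimage_splice E3 E4; rewrite E1.
- by have := index_preimage_splice E3 E4; rewrite E1.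
Qed.

Lemma eq_mixed_unfolding (A B : midx D -> C) : A =1 B ->
  mixed_unfolding A R n m = mixed_unfolding B R n m.
Proof. by move=> eqAB; apply/matrixP => p q; rewrite !mxE; apply: eq_bigr => j _. Qed.

Lemma mixed_unfolding_sum (K : finType) (c : K -> C) (A : K -> midx D -> C) :
  mixed_unfolding (fun j => \sum_k c k * A k j) R n m =
  \matrix_(p, q) \sum_k c k * mixed_unfolding (A k) R n m p q.
Proof.
apply/matrixP => p q; rewrite !mxE exchange_big; apply: eq_bigr => k _.
by rewrite mxE mulr_sumr.
Qed.

Lemma mixed_unfolding_frobenius (A : midx D -> C) :
  \sum_p \sum_q `|mixed_unfolding A R n m p q| ^+ 2 <= \sum_j `|A j| ^+ 2.
Proof.
have norm2E p q : `|mixed_unfolding A R n m p q| ^+ 2 =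
    \sum_j if (row_index j == p) && (col_index j == q) then `|A j| ^+ 2 else 0.
  transitivity (mixed_unfolding (fun j => `|A j| ^+ 2) R n m p q).
    by rewrite !mixed_unfoldingE; case: index_preimage; rewrite ?normr0 ?expr2 ?mulr0.
  by rewrite mxE big_mkcond.
rewrite [leLHS](eq_bigr _ (fun p _ => eq_bigr _ (fun q _ => norm2E p q))).
rewrite [leLHS](eq_bigr _ (fun p _ => exchange_big _ _ _ _ _ _)) [leLHS]exchange_big.
apply: ler_sum => j _.
have A2_ge0 : 0 <= `|A j| ^+ 2 by rewrite exprn_ge0.
apply: le_trans (sum_ord_indicator_le _ (row_index j) A2_ge0).
apply: ler_sum => p _; case: eqP => _ /=; last by rewrite big1.
exact: sum_ord_indicator_le.
Qed.

Lemma frobenius_outer (x : forall l, 'I_(D l) -> C) :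
  \sum_(j : midx D) `|\prod_l x l (j l)| ^+ 2 = \prod_l \sum_a `|x l a| ^+ 2.
Proof.
rewrite -sum_midx_prod; apply: eq_bigr => j _.
by rewrite normr_prod -prodrXl.
Qed.

Lemma trnorm_unfolding_mixture_le (K : finType) (c : K -> C)
    (x : K -> forall l, 'I_(D l) -> C) : (forall k, 0 <= c k) ->
  trnorm (mixed_unfolding (fun j => \sum_k c k * \prod_l x k l (j l)) R n m) <=
  \sum_k c k * \prod_l sqrtC (\sum_a `|x k l a| ^+ 2).
Proof.
move=> c_ge0; rewrite mixed_unfolding_sum.
apply: le_trans (trnorm_sum_rank1_le _) _.
  by move=> k p q p' q'; rewrite mulrACA mixed_unfolding_outer_minors mulrACA.
apply: ler_sum => k _.
set U := mixed_unfolding _ R n m.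
have frob_ge0 : 0 <= \sum_p \sum_q `|U p q| ^+ 2.
  by apply: sumr_ge0 => p _; apply: sumr_norm2_ge0.
have -> : \sum_p \sum_q `|c k * U p q| ^+ 2 = c k ^+ 2 * \sum_p \sum_q `|U p q| ^+ 2.
  rewrite mulr_sumr; apply: eq_bigr => p _; rewrite mulr_sumr; apply: eq_bigr => q _.
  by rewrite normrM exprMn ger0_norm.
rewrite sqrtCM ?nnegrE ?exprn_ge0 // sqrCK // ler_wpM2l //.
rewrite -sqrtC_prod => [|l]; last exact: sumr_norm2_ge0.
rewrite ler_sqrtC ?nnegrE ?prodr_ge0 // => [|l _]; last exact: sumr_norm2_ge0.
by rewrite -frobenius_outer mixed_unfolding_frobenius.
Qed.

End MixedUnfolding.

Lemma sum_option (V : nmodType) (T : finType) (F : option T -> V) :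
  \sum_x F x = F None + \sum_x F (Some x).
Proof.
rewrite (bigD1 None) //=; congr (_ + _).
rewrite (reindex_omap Some (fun o => o)) /=; last by case.
by apply: eq_bigl => x; rewrite eqxx.
Qed.

Section GellMannFrame.
Variables (C : numClosedFieldType) (d : nat) (G : nat -> 'M[C]_d) (kappa : C).
Hypothesis G_basis : GM_basis G kappa.
Local Notation E := (d ^ 2 - 1)%N.

Lemma GM_kappa_gt0 : 0 < kappa.
Proof. by case: G_basis => _ _ _ _; apply: lt_le_trans ltr01. Qed.

(* Conjugated so that the coordinates of [A] are [tr (A G_k)], as in [corr_tensor]. *)
Definition GM_frame (k : option 'I_E) : 'M[C]_d :=
  if k is Some k then (sqrtC kappa)^-1 *: adjmx (G k.+1) else (sqrtC d%:R)^-1 *: 1%:M.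

Lemma GM_frame_coord (A : 'M[C]_d) k : \tr (adjmx (GM_frame k) *m A) =
  if k is Some k then \tr (A *m G k.+1) / sqrtC kappa else \tr A / sqrtC d%:R.
Proof.
case: k => [k|] /=; rewrite adjmxZ -scalemxAl mxtraceZ mulrC fmorphV /=.
  by rewrite adjmxK mxtrace_mulC conj_Creal // sqrtC_real // ltW // GM_kappa_gt0.
by rewrite conj_Creal ?sqrtC_real ?ler0n // /adjmx map_mx1 trmx1 mul1mx.
Qed.

Lemma GM_frame_orthonormal :
  orthonormal_or_zero (fun k (ab : 'I_d * 'I_d) => GM_frame k ab.1 ab.2).
Proof.
case: G_basis => _ _ trG orthG _.
have k_range (k : 'I_E) : (1 <= k.+1 < d ^ 2)%N by have := ltn_ord k; lia.
have sqrt_kappa_neq0 : sqrtC kappa != 0 by rewrite sqrtC_eq0 gt_eqF ?GM_kappa_gt0.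
have inner j j' : \sum_(ab : 'I_d * 'I_d) (GM_frame j ab.1 ab.2)^* * GM_frame j' ab.1 ab.2 =
    \tr (adjmx (GM_frame j) *m GM_frame j') by rewrite mxtrace_adjmx_mul pair_bigA.
split=> [j j' jj'|j]; rewrite inner GM_frame_coord.
  case: j j' jj' => [k|] [k'|] //= kk'.
  - have k'_neq_k : (k' != k :> nat) by apply: contraNneq kk' => /val_inj ->.
    by rewrite -scalemxAl mxtraceZ orthG ?k_range // eqSS (negPf k'_neq_k) mulr0 mul0r.
  - by rewrite -scalemxAl mul1mx mxtraceZ trG ?k_range // mulr0 mul0r.
  - by rewrite mxtraceZ mxtrace_adjmx trG ?k_range // rmorph0 mulr0 mul0r.
case: j => [k|] /=.
  left; rewrite -scalemxAl mxtraceZ orthG ?k_range // eqxx.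
  by rewrite mulrC mulrA -invfM -expr2 sqrtCK mulVf // gt_eqF ?GM_kappa_gt0.
have [d0|d_gt0] := posnP d; first by right; rewrite d0 => -[[]].
by left; rewrite mxtraceZ mxtrace1 mulrC mulrA -invfM -expr2 sqrtCK mulVf // gt_eqF ?ltr0n.
Qed.

Lemma GM_bessel (A : 'M[C]_d) :
  `|\tr A| ^+ 2 / d%:R + \sum_(k < E) `|\tr (A *m G k.+1)| ^+ 2 / kappa <=
  \sum_a \sum_b `|A a b| ^+ 2.
Proof.
have norm_div_sqrt (x c : C) : 0 <= c -> `|x / sqrtC c| ^+ 2 = `|x| ^+ 2 / c.
  by move=> c_ge0; rewrite normrM exprMn normfV [`|sqrtC c|]ger0_norm ?sqrtC_ge0 // exprVn sqrtCK.
have coord2 k : `|\sum_(ab : 'I_d * 'I_d) (GM_frame k ab.1 ab.2)^* * A ab.1 ab.2| ^+ 2 =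
    if k is Some k then `|\tr (A *m G k.+1)| ^+ 2 / kappa else `|\tr A| ^+ 2 / d%:R.
  rewrite -(pair_bigA _ (fun a b => (GM_frame k a b)^* * A a b)) -mxtrace_adjmx_mul.
  by rewrite GM_frame_coord; case: k => [k|]; rewrite norm_div_sqrt ?ler0n ?(ltW GM_kappa_gt0).
have := bessel (fun ab : 'I_d * 'I_d => A ab.1 ab.2) GM_frame_orthonormal.
by rewrite sum_option coord2 (eq_bigr _ (fun k _ => coord2 (Some k))) pair_bigA.
Qed.

Lemma pure_state_trace (psi : 'M[C]_d) : pure_state psi -> \tr psi = 1.
Proof. by case=> v [v_unit ->]; rewrite mxtrace_mulC v_unit mxtrace1. Qed.

Lemma pure_state_frobenius (psi : 'M[C]_d) : pure_state psi ->
  \sum_a \sum_b `|psi a b| ^+ 2 = 1.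
Proof.
case=> v [v_unit psiE].
have psi_sa : adjmx psi = psi by rewrite psiE adjmx_mul adjmxK.
under eq_bigr do under eq_bigr do rewrite normCK mulrC.
rewrite -mxtrace_adjmx_mul psi_sa -(pure_state_trace (ex_intro _ v (conj v_unit psiE))).
by rewrite psiE -mulmxA (mulmxA (adjmx v)) v_unit mul1mx.
Qed.

Lemma pure_state_bloch_le (psi : 'M[C]_d) : pure_state psi ->
  \sum_(k < E) `|d%:R / kappa * \tr (psi *m G k.+1)| ^+ 2 <= (d ^ 2 - d)%:R / kappa.
Proof.
move=> psi_pure; have := GM_bessel psi.
rewrite pure_state_frobenius // pure_state_trace // normr1 expr1n -lerBrDl.
have kappa_neq0 : kappa != 0 by rewrite gt_eqF ?GM_kappa_gt0.
have dk_ge0 : 0 <= d%:R ^+ 2 / kappa by rewrite divr_ge0 ?exprn_ge0 ?ler0n ?ltW ?GM_kappa_gt0.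
move=> /(ler_wpM2l dk_ge0) bessel_psi.
have -> : \sum_(k < E) `|d%:R / kappa * \tr (psi *m G k.+1)| ^+ 2 =
    d%:R ^+ 2 / kappa * \sum_(k < E) `|\tr (psi *m G k.+1)| ^+ 2 / kappa.
  rewrite mulr_sumr; apply: eq_bigr => k _.
  by rewrite normrM exprMn ger0_norm ?divr_ge0 ?ler0n ?ltW ?GM_kappa_gt0 //; field.
apply: le_trans bessel_psi _.
have d_le_d2 : (d <= d ^ 2)%N by rewrite -mulnn; nia.
rewrite natrB // natrX le_eqVlt; apply/orP; left; apply/eqP.
have [->|d_neq0] := eqVneq (d%:R : C) 0; first by rewrite invr0 expr0n !mul0r subrr mul0r.
by field; rewrite kappa_neq0 d_neq0.
Qed.

End GellMannFrame.

Lemma corr_tensor_mixture (C : numClosedFieldType) N (d : 'I_N -> nat)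
    (G : forall l : 'I_N, nat -> 'M[C]_(d l)) (kappa : 'I_N -> C)
    (rho : midx d -> midx d -> C) M (p : 'I_M -> C)
    (psi : 'I_M -> forall l : 'I_N, 'M[C]_(d l)) :
  (forall J K, rho J K = \sum_(i < M) p i * \prod_(l < N) psi i l (J l) (K l)) ->
  forall j, corr_tensor G kappa rho j =
    \sum_(i < M) p i * \prod_l ((d l)%:R / kappa l * \tr (psi i l *m G l (j l).+1)).
Proof.
move=> rhoE j; rewrite /corr_tensor.
transitivity ((\prod_l (d l)%:R / \prod_l kappa l) *
    \sum_i p i * \prod_l \tr (psi i l *m G l (j l).+1)); last first.
  rewrite mulr_sumr; apply: eq_bigr => i _.
  by rewrite mulrCA big_split /= prodf_div.
congr (_ * _).
transitivity (\sum_i p i * \sum_(J : midx d) \sum_(K : midx d)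
    \prod_l (psi i l (J l) (K l) * G l (j l).+1 (K l) (J l))).
  under eq_bigr do under eq_bigr do rewrite rhoE mulr_suml.
  under eq_bigr do rewrite exchange_big /=.
  rewrite exchange_big /=; apply: eq_bigr => i _.
  rewrite mulr_sumr; apply: eq_bigr => J _; rewrite mulr_sumr; apply: eq_bigr => K _.
  by rewrite big_split /= mulrA.
apply: eq_bigr => i _; congr (_ * _).
rewrite (eq_bigr _ (fun (J : midx d) _ => sum_midx_prod
  (fun l b => psi i l (J l) b * G l (j l).+1 b (J l)))) /=.
rewrite (sum_midx_prod (fun l a => \sum_b psi i l a b * G l (j l).+1 b a)).
by apply: eq_bigr => l _; apply: eq_bigr => a _; rewrite mxE.
Qed.

Theorem theorem6 (C : numClosedFieldType) (N : nat) (d : 'I_N -> nat)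
  (G : forall l : 'I_N, nat -> 'M[C]_(d l)) (kappa : 'I_N -> C)
  (rho : midx d -> midx d -> C) :
  (2 <= N)%N ->
  (forall l, GM_basis (G l) (kappa l)) ->
  fully_separable rho ->
  tensor_trnorm (corr_tensor G kappa rho) <=
    \prod_(l < N) sqrtC ((d l ^ 2 - d l)%:R / kappa l).
Proof.
(* The bound holds for every [N]. *)
move=> _ G_basis [M [p [psi [p_ge0 p_sum1 psi_pure rhoE]]]].
have bound_ge0 : 0 <= \prod_(l < N) sqrtC ((d l ^ 2 - d l)%:R / kappa l).
  by apply: prodr_ge0 => l _; rewrite sqrtC_ge0 divr_ge0 ?ler0n ?ltW ?(GM_kappa_gt0 (G_basis l)).
apply: bigmax_le => // R _; apply: bigmax_le => // n _; apply: bigmax_le => // m _.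
rewrite (eq_mixed_unfolding _ _ _ (corr_tensor_mixture G kappa rhoE)).
pose x i l (k : 'I_(d l ^ 2 - 1)) := (d l)%:R / kappa l * \tr (psi i l *m G l k.+1).
apply: le_trans (trnorm_unfolding_mixture_le (ltn_ord n) (ltn_ord m) x p_ge0) _.
rewrite -[leRHS]mul1r -[X in _ <= X * _]p_sum1 mulr_suml; apply: ler_sum => i _.
apply: ler_wpM2l; first exact: p_ge0.
apply: ler_prod => l _.
rewrite sqrtC_ge0 sumr_norm2_ge0 ler_sqrtC ?nnegrE ?sumr_norm2_ge0 ?pure_state_bloch_le //.
by rewrite divr_ge0 ?ler0n ?ltW ?(GM_kappa_gt0 (G_basis l)).
Qed.
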